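(* Let $p$ be a prime with $p\equiv 1\pmod 6$. Then there exist an integer $k$ with $2\le k\le p-1$ and an orthogonal trade $T$ in $B_p$ of index $(1,k)$ such that $|T|$ is not divisible by $p$. More precisely, for any integer $k$ with $2\le k\le (p+1)/2$ and $k^2-k+1\equiv 0\pmod p$ (such $k$ exists), there is an orthogonal trade of index $(1,k)$ in $B_p$ of size $3k(k-1)$.
   Context: All arithmetic is modulo $p$. A Latin square of order $p$ is viewed as a set of (row, column, symbol) triples in $\mathbb{Z}_p^3$. For $1\le k\le p-1$, $B_p(k)$ is the Latin square with symbol $ki+j$ in cell $(i,j)$, $i,j\in\mathbb{Z}_p$; $B_p=B_p(1)$. A Latin trade in a Latin square $L$ is a subset $T\subseteq L$ for which there is a partial Latin square $T'$ (a disjoint mate) such that $T$ and $T'$ occupy the same set of cells, $T\cap T'=\emptyset$, and each row (respectively column) of $T$ contains the same set of symbols as the corresponding row (column) of $T'$. Two Latin squares of order $p$ are orthogonal if superimposing them yields each of the $p^2$ ordered pairs exactly once. An orthogonal trade of index $(\ell,k)$ is a Latin trade $T\subseteq B_p(\ell)$ having a disjoint mate $T'$ such that $(B_p(\ell)\setminus T)\cup T'$ is orthogonal to $B_p(k)$. $|T|$ is the number of triples in $T$. *)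

From mathcomp Require Import all_boot.
Set Implicit Arguments. Unset Strict Implicit. Unset Printing Implicit Defensive.

(* A triple (row, column, symbol) in Z_p^3, with Z_p represented by 'I_p
   (values 0..p-1, arithmetic taken modulo p). *)
Definition triple (p : nat) := ('I_p * 'I_p * 'I_p)%type.

Section LatinDefs.
Variable p : nat.

Definition trow (t : triple p) : 'I_p := t.1.1.
Definition tcol (t : triple p) : 'I_p := t.1.2.
Definition tsym (t : triple p) : 'I_p := t.2.

Definition Bp (k : nat) : {set triple p} :=
  [set t : triple p | val (tsym t) == (k * trow t + tcol t) %% p].

Definition partial_latin (S : {set triple p}) : Prop :=
  forall t u, t \in S -> u \in S ->
    ((trow t = trow u /\ tcol t = tcol u) \/
     (trow t = trow u /\ tsym t = tsym u) \/
     (tcol t = tcol u /\ tsym t = tsym u)) -> t = u.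

Definition latin_square (L : {set triple p}) : Prop :=
  (forall i j : 'I_p, #|[set t in L | (trow t == i) && (tcol t == j)]| = 1) /\
  (forall i s : 'I_p, #|[set t in L | (trow t == i) && (tsym t == s)]| = 1) /\
  (forall j s : 'I_p, #|[set t in L | (tcol t == j) && (tsym t == s)]| = 1).

Definition cells (S : {set triple p}) : {set 'I_p * 'I_p} := [set t.1 | t in S].
Definition row_syms (S : {set triple p}) (r : 'I_p) : {set 'I_p} :=
  [set tsym t | t in [set t in S | trow t == r]].
Definition col_syms (S : {set triple p}) (c : 'I_p) : {set 'I_p} :=
  [set tsym t | t in [set t in S | tcol t == c]].

Definition disjoint_mate (T T' : {set triple p}) : Prop :=
  partial_latin T' /\ cells T = cells T' /\ T :&: T' = set0 /\
  (forall r, row_syms T r = row_syms T' r) /\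
  (forall c, col_syms T c = col_syms T' c).

Definition latin_trade (L T : {set triple p}) : Prop :=
  T \subset L /\ exists T', disjoint_mate T T'.

Definition orthogonal (L1 L2 : {set triple p}) : Prop :=
  latin_square L1 /\ latin_square L2 /\
  forall a b : 'I_p,
    #|[set c : 'I_p * 'I_p | [exists t1 in L1, exists t2 in L2,
        [&& t1.1 == c, t2.1 == c, tsym t1 == a & tsym t2 == b]]]| = 1.

Definition orthogonal_trade (l k : nat) (T : {set triple p}) : Prop :=
  T \subset Bp l /\
  exists T', disjoint_mate T T' /\ orthogonal ((Bp l :\: T) :|: T') (Bp k).

End LatinDefs.

(* In the coordinates A = j and B = k i + j of a cell (i, j), read as integers in
   [0, p), the trade lives on the hexagon 0 <= A, B <= 2(k - 1), |A - B| <= k - 1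
   with its centre removed, which has 3k(k - 1) cells.  As k^2 - k + 1 = 0 mod p,
   zeta = 1 - k = k^-1 is a primitive sixth root of unity, and the new square has
   symbol i + j + zeta^s in a hexagon cell lying in the s-th sector, and i + j
   elsewhere.  The new symbol is i + (A + zeta^s) along a row,
   (B + zeta^(s-1)) zeta + A k along a column and B zeta + (A + zeta^(s+1)) k
   along a line of constant symbol of B_p(k); so the Latin property and the
   orthogonality both reduce to the fact that these sector-dependent unit moves
   permute the hexagon cells on each line of the triangular lattice.  Such a k
   exists since 3 divides p - 1, the order of the unit group of Z_p: minus an
   element of order 3 is a root of x^2 - x + 1, and the other root is 1 - k. *)

From mathcomp Require Import all_boot ssralg ssrnum ssrint zmodp finalg.
From mathcomp Require Import fingroup pgroup zify ring.
Set Implicit Arguments. Unset Strict Implicit. Unset Printing Implicit Defensive.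
Import GRing.Theory Num.Theory.

Lemma eq_imset_inj_off (T : finType) (f g : T -> T) (P : {set T}) :
  injective f -> injective g -> {in ~: P, f =1 g} -> f @: P = g @: P.
Proof.
move=> f_inj g_inj fg; apply/eqP; rewrite eqEcard !card_imset // leqnn andbT.
apply/subsetP=> _ /imsetP[x Px ->]; apply/imsetP.
set y := invF g_inj (f x); exists y; last by rewrite f_invF.
apply: contraT => nPy; have fyx : f y = f x by rewrite fg ?inE // f_invF.
by rewrite (f_inj _ _ fyx) Px in nPy.
Qed.

Section Graph.
Variable n : nat.
Implicit Types G H : 'I_n -> 'I_n -> 'I_n.

Definition graph G : {set triple n} := [set t | tsym t == G (trow t) (tcol t)].

Definition latin_fun G : Prop := (forall i, injective (G i)) /\ (forall j, injective (G^~ j)).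

Lemma graph_latin_square G : latin_fun G -> latin_square (graph G).
Proof.
move=> [G_row G_col]; split; [|split].
- move=> i j; apply: (@eq_card1 _ (i, j, G i j)) => -[[a b] c].
  rewrite !inE !xpair_eqE /trow /tcol /tsym /=.
  by case: (a =P i) => [->|_]; case: (b =P j) => [->|_]; rewrite ?andbF ?andbT.
- move=> i s; pose j := invF (G_row i) s.
  apply: (@eq_card1 _ (i, j, s)) => -[[a b] c].
  rewrite !inE !xpair_eqE /trow /tcol /tsym /=.
  case: (a =P i) => [->|_]; rewrite ?andbF //=.
  case: (c =P s) => [->|_]; rewrite ?andbF ?andbT //=.
  apply/eqP/eqP => [e|->]; first by rewrite /j e (invF_f (G_row i)).
  by rewrite /j (f_invF (G_row i) s).
- move=> j s; pose i := invF (G_col j) s.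
  apply: (@eq_card1 _ (i, j, s)) => -[[a b] c].
  rewrite !inE !xpair_eqE /trow /tcol /tsym /=.
  case: (b =P j) => [->|_]; rewrite ?andbF //=.
  case: (c =P s) => [->|_]; rewrite ?andbF ?andbT //=.
  apply/eqP/eqP => [e|->]; first by rewrite /i e (invF_f (G_col j)).
  by rewrite /i (f_invF (G_col j) s).
Qed.

Lemma graph_orthogonal G H :
  latin_fun G -> latin_fun H -> injective (fun c : 'I_n * 'I_n => (G c.1 c.2, H c.1 c.2)) ->
  orthogonal (graph G) (graph H).
Proof.
move=> latG latH GH_inj; split; [exact: graph_latin_square|split; [exact: graph_latin_square|]].
move=> a b; pose c0 := invF GH_inj (a, b).
have [Gc0 Hc0] : G c0.1 c0.2 = a /\ H c0.1 c0.2 = b.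
  by have [] := f_invF GH_inj (a, b).
apply: (@eq_card1 _ c0) => c; rewrite inE; apply/existsP/eqP.
- case=> -[c1 a1] /andP[]; rewrite inE => /eqP ->.
  case/existsP=> -[c2 b1] /andP[]; rewrite inE => /eqP ->.
  case/and4P=> /eqP/= <- /eqP/= e12 /eqP/= Ga /eqP/= Hb.
  by apply: (GH_inj); rewrite /= Gc0 Hc0 -Ga -Hb e12.
- move=> ->; exists (c0, a); rewrite inE -Gc0 eqxx /=.
  by apply/existsP; exists (c0, b); rewrite inE -Hc0 !eqxx.
Qed.

Lemma graph_partial_latin G (S : {set triple n}) :
  latin_fun G -> S \subset graph G -> partial_latin S.
Proof.
move=> [G_row G_col] /subsetP SG [[i1 j1] s1] [[i2 j2] s2] /SG + /SG.
rewrite !inE /trow /tcol /tsym /= => /eqP-> /eqP->.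
by case=> [[-> ->]|[[-> /G_row ->]|[-> /G_col ->]]].
Qed.

Definition diff_cells G H : {set 'I_n * 'I_n} := [set c | G c.1 c.2 != H c.1 c.2].

Definition trade_of G H : {set triple n} := [set t in graph G | t.1 \in diff_cells G H].

Lemma trade_of_sub G H : trade_of G H \subset graph G.
Proof. by apply/subsetP => t /setIdP[]. Qed.

Lemma diff_cellsC G H : diff_cells G H = diff_cells H G.
Proof. by apply/setP => c; rewrite !inE eq_sym. Qed.

Lemma trade_ofE G H : trade_of G H = (fun c => (c, G c.1 c.2)) @: diff_cells G H.
Proof.
apply/setP => -[c s]; rewrite !inE /trow /tcol /tsym /=.
apply/andP/imsetP => [[/eqP-> Dc]|[c' + [-> ->]]]; first by exists c; rewrite ?inE.
by rewrite inE eqxx.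
Qed.

Lemma card_trade_of G H : #|trade_of G H| = #|diff_cells G H|.
Proof. by rewrite trade_ofE card_imset // => c c' []. Qed.

Lemma cells_trade_of G H : cells (trade_of G H) = diff_cells G H.
Proof. by rewrite /cells trade_ofE -imset_comp imset_id. Qed.

Lemma row_syms_trade_of G H r :
  row_syms (trade_of G H) r = G r @: [set j | (r, j) \in diff_cells G H].
Proof.
rewrite /row_syms trade_ofE; apply/setP => s; apply/imsetP/imsetP.
- case=> _ /setIdP[/imsetP[[i j] Dij ->]] /eqP ir ->.
  by rewrite /trow /= in ir; subst r; exists j; first rewrite inE.
- case=> j; rewrite inE => Drj ->; exists ((r, j), G r j) => //.
  by rewrite inE eqxx andbT; apply/imsetP; exists (r, j).
Qed.

Lemma col_syms_trade_of G H c :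
  col_syms (trade_of G H) c = G^~ c @: [set i | (i, c) \in diff_cells G H].
Proof.
rewrite /col_syms trade_ofE; apply/setP => s; apply/imsetP/imsetP.
- case=> _ /setIdP[/imsetP[[i j] Dij ->]] /eqP jc ->.
  by rewrite /tcol /= in jc; subst c; exists i; first rewrite inE.
- case=> i; rewrite inE => Dic ->; exists ((i, c), G i c) => //.
  by rewrite inE eqxx andbT; apply/imsetP; exists (i, c).
Qed.

Lemma trade_of_mate G H :
  latin_fun G -> latin_fun H -> disjoint_mate (trade_of G H) (trade_of H G).
Proof.
move=> latG latH; split; [|split; [|split; [|split]]].
- exact: graph_partial_latin latH (trade_of_sub H G).
- by rewrite !cells_trade_of diff_cellsC.
- apply/setP => -[[i j] s]; rewrite !inE /trow /tcol /tsym /=.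
  by apply/negP => /andP[/andP[/eqP-> _] /andP[/eqP-> /eqP]].
- move=> r; rewrite !row_syms_trade_of diff_cellsC.
  by apply: eq_imset_inj_off (latG.1 r) (latH.1 r) _ => j; rewrite !inE negbK => /eqP.
- move=> c; rewrite !col_syms_trade_of diff_cellsC.
  by apply: eq_imset_inj_off (latG.2 c) (latH.2 c) _ => i; rewrite !inE negbK => /eqP.
Qed.

Lemma graph_trade_of G H : (graph G :\: trade_of G H) :|: trade_of H G = graph H.
Proof.
apply/setP => -[[i j] s]; rewrite !inE /trow /tcol /tsym /=.
case: (G i j =P H i j) => [->|/eqP nGH]; first by rewrite eqxx !andbF orbF.
by rewrite eq_sym in nGH; rewrite nGH /= andbT andNb andbT.
Qed.

Lemma orthogonal_trade_of (l k : nat) G H :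
  Bp n l = graph G -> latin_fun G -> latin_fun H -> orthogonal (graph H) (Bp n k) ->
  orthogonal_trade l k (trade_of G H).
Proof.
move=> BG latG latH orthH; split; first by rewrite BG trade_of_sub.
by exists (trade_of H G); rewrite BG graph_trade_of; split; first exact: trade_of_mate.
Qed.

End Graph.

Definition root6 (k m : nat) : int :=
  nth 0%R [:: 1; 1 - k%:Z; - k%:Z; -1; k%:Z - 1; k%:Z]%R (m %% 6).

Section SixthRoot.
Local Open Scope ring_scope.
Variables (R : comPzRingType) (k : nat).
Local Notation K := (k%:R : R).
Hypothesis Kroot : K ^+ 2 - K + 1 = 0.

Lemma eq_mod_Kroot (x y c : R) : x - y = c * (K ^+ 2 - K + 1) -> x = y.
Proof. by rewrite Kroot mulr0 => /eqP; rewrite subr_eq0 => /eqP. Qed.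

Lemma mulr_1subK : K * (1 - K) = 1.
Proof. by apply: (eq_mod_Kroot (c := -1)); ring. Qed.

Lemma mulKr_1subK : cancel (GRing.mul K) (GRing.mul (1 - K)).
Proof. by move=> x; rewrite mulrA [(1 - K) * K]mulrC mulr_1subK mul1r. Qed.

Lemma mul1subKr_K : cancel (GRing.mul (1 - K)) (GRing.mul K).
Proof. by move=> x; rewrite mulrA mulr_1subK mul1r. Qed.

Lemma addr_hex_coord (i j : R) : i + j = (K * i + j) * (1 - K) + j * K.
Proof. by apply: (eq_mod_Kroot (c := i)); ring. Qed.

Lemma root6E m : (root6 k m)%:~R = (1 - K) ^+ m.
Proof.
have z2 : (1 - K) ^+ 2 = - K by apply: (eq_mod_Kroot (c := 1)); ring.
have z3 : (1 - K) ^+ 3 = -1 by apply: (eq_mod_Kroot (c := (2 - K))); ring.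
rewrite {2}(divn_eq m 6) exprD mulnC exprM (exprM _ 3 2) z3 sqrrN !expr1n mul1r.
rewrite /root6; have : (m %% 6 < 6)%N by rewrite ltn_mod.
case: (m %% 6)%N => [|[|[|[|[|[|//]]]]]] _ /=; rewrite ?intrN ?intrB -?pmulrn //.
- by rewrite (exprD _ 3 1) z3 mulN1r opprB.
- by rewrite (exprD _ 3 2) z3 z2 mulN1r opprK.
Qed.
End SixthRoot.

Section Hexagon.
Local Open Scope ring_scope.
Variable k : nat.
Local Notation r := (k%:Z - 1).

Definition in_hex (A B : int) : bool :=
  [&& 0 <= A, 0 <= B, A <= 2 * r, B <= 2 * r, A <= B + r, B <= A + r & (A != r) || (B != r)].

(* The sectors around the centre (r, r), numbered counterclockwise in the (A, B)-plane. *)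
Definition hex_sector (A B : int) : nat :=
  if (r <= A) && (B < r) then 0 else
  if (r <= B) && (B < A) then 1 else
  if (r < A) && (A <= B) then 2 else
  if (A <= r) && (r < B) then 3 else
  if (B <= r) && (A < B) then 4 else 5.

Definition hex_shift (e : nat) (A B : int) : int :=
  if in_hex A B then root6 k (hex_sector A B + e) else 0.

(* Off the hexagon the shifts vanish, so the injectivity lemmas below say that the
   moves permute the hexagon cells of each diagonal, vertical or horizontal line;
   they are checked sector by sector. *)
Ltac hex_cases :=
  rewrite /hex_shift /hex_sector /in_hex; (repeat case: ifP => ?); rewrite /root6 /=; lia.

Lemma hex_shift_bounds (P A B : int) : (2 <= k)%N -> 2 * k%:Z <= P + 1 ->
  0 <= A < P -> 0 <= B < P ->
  [/\ 0 <= A + hex_shift 0 A B < P, 0 <= B + hex_shift 0 A B < P,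
      0 <= B + hex_shift 5 A B < P & 0 <= A + hex_shift 1 A B < P].
Proof. move=> k2 kP hA hB; split; hex_cases. Qed.

Lemma hex_shift_diag_inj A1 B1 A2 B2 : (2 <= k)%N ->
  A1 + hex_shift 0 A1 B1 = A2 + hex_shift 0 A2 B2 ->
  B1 + hex_shift 0 A1 B1 = B2 + hex_shift 0 A2 B2 -> A1 = A2 /\ B1 = B2.
Proof. move=> k2; hex_cases. Qed.

Lemma hex_shift_vert_inj A B1 B2 : (2 <= k)%N ->
  B1 + hex_shift 5 A B1 = B2 + hex_shift 5 A B2 -> B1 = B2.
Proof. move=> k2; hex_cases. Qed.

Lemma hex_shift_horiz_inj A1 A2 B : (2 <= k)%N ->
  A1 + hex_shift 1 A1 B = A2 + hex_shift 1 A2 B -> A1 = A2.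
Proof. move=> k2; hex_cases. Qed.

End Hexagon.

Lemma sum_nat_interval (n lo hi : nat) : \sum_(b < n) (lo <= b <= hi) = minn hi.+1 n - lo.
Proof.
elim: n => [|n IH]; first by rewrite big_ord0; lia.
by rewrite big_ord_recr /= IH; lia.
Qed.

Section HexCount.
Variable r : nat.

Definition hex_col_len (a : nat) : nat :=
  if a <= r then a + r + 1 - (a == r) else if a <= 2 * r then 3 * r + 1 - a else 0.

Lemma in_hex_col (a b : nat) : a <= 2 * r ->
  (a - r <= b <= minn (a + r) (2 * r)) = in_hex r.+1 a b + ((a == r) && (b == r)) :> nat.
Proof. by rewrite /in_hex; lia. Qed.

Lemma hex_col_count (n a : nat) : 2 * r < n -> \sum_(b < n) in_hex r.+1 a b = hex_col_len a.
Proof.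
move=> rn; have [ha | ha] := leqP a (2 * r); last first.
  rewrite big1 /hex_col_len => [|b _]; first by do 2?case: ifP; lia.
  by rewrite /in_hex; lia.
have := sum_nat_interval n (a - r) (minn (a + r) (2 * r)).
under eq_bigr => b _ do rewrite in_hex_col //.
rewrite big_split /=.
have -> : \sum_(b < n) ((a == r) && (b == r :> nat)) = (a == r).
  case: eqP => [_|_]; last by rewrite big1.
  rewrite (eq_bigr (fun b : 'I_n => (r <= b <= r) : nat)) => [|b _]; last by lia.
  by rewrite sum_nat_interval; lia.
by rewrite /hex_col_len; do ?case: ifP => ?; lia.
Qed.

Lemma sum_hex_col_len (m : nat) : 0 < r ->
  let t := m - r.+1 in
  if m <= r then 2 * \sum_(a < m) hex_col_len a = m * (m + 2 * r + 1)
  else if m <= 2 * r then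
    2 * \sum_(a < m) hex_col_len a + t * t = 3 * r * r + 5 * r + (4 * r + 1) * t
  else \sum_(a < m) hex_col_len a = 3 * r.+1 * r.
Proof.
move=> r0; elim: m => [|m IH]; first by rewrite big_ord0.
move: IH; rewrite /= big_ord_recr /= /hex_col_len.
move: (\sum_(i < m) _) => S; do ?case: ifP => ?; first [lia | nia].
Qed.

Lemma card_hex_cells (n : nat) : 0 < r -> 2 * r < n ->
  #|[set c : 'I_n * 'I_n | in_hex r.+1 (val c.1) (val c.2)]| = 3 * r.+1 * r.
Proof.
move=> r0 rn; rewrite -sum1_card big_mkcond /=.
rewrite (eq_bigr (fun c : 'I_n * 'I_n => in_hex r.+1 (val c.1) (val c.2) : nat)); last first.
  by move=> c _; rewrite inE; case: (in_hex _ _ _).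
rewrite -(pair_bigA _ (fun a b : 'I_n => in_hex r.+1 (val a) (val b) : nat)) /=.
under eq_bigr => a _ do rewrite hex_col_count //.
by have := sum_hex_col_len n r0; rewrite /= !ifN //; lia.
Qed.
End HexCount.

Section HexSquare.
Local Open Scope ring_scope.
Variables (q k : nat).
Local Notation p := q.+2.
Local Notation K := (k%:R : 'I_p).
Hypothesis k_ge2 : (2 <= k)%N.
Hypothesis k_small : (2 * k <= p + 1)%N.
Hypothesis Kroot : K ^+ 2 - K + 1 = 0.

Lemma Bp_graph (l : nat) : Bp p l = graph (fun i j : 'I_p => l%:R * i + j).
Proof.
apply/setP => t; rewrite !inE -val_eqE /= Zp_nat /=.
by rewrite modnMml modnDml.
Qed.

Lemma intr_Zp (n : nat) : (n%:Z)%:~R = n%:R :> 'I_p.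
Proof. by rewrite -pmulrn. Qed.

Lemma intr_Zp_inj (u v : int) :
  0 <= u < p%:Z -> 0 <= v < p%:Z -> u%:~R = v%:~R :> 'I_p -> u = v.
Proof.
case: u v => [m|//] [n|//] /andP[_ mp] /andP[_ np].
by rewrite !intr_Zp => /(congr1 val); rewrite !Zp_nat /= !modn_small; lia.
Qed.

Definition hex_A (j : 'I_p) : int := (val j)%:Z.
Definition hex_B (i j : 'I_p) : int := (val (K * i + j))%:Z.

Lemma hex_A_bounds j : 0 <= hex_A j < p%:Z.
Proof. by rewrite /hex_A; case: j => /= j jp; lia. Qed.
Lemma hex_B_bounds i j : 0 <= hex_B i j < p%:Z.
Proof. by rewrite /hex_B; case: (K * i + j) => /= b bp; lia. Qed.

Lemma hex_AE j : (hex_A j)%:~R = j.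
Proof. by rewrite intr_Zp natr_Zp. Qed.
Lemma hex_BE i j : (hex_B i j)%:~R = K * i + j.
Proof. by rewrite intr_Zp natr_Zp. Qed.

Definition hex_disp (e : nat) (i j : 'I_p) : int := hex_shift k e (hex_A j) (hex_B i j).

Definition hex_square (i j : 'I_p) : 'I_p := i + j + (hex_disp 0 i j)%:~R.

Lemma hex_disp_rot i j :
  (hex_disp 0 i j)%:~R = (hex_disp 5 i j)%:~R * (1 - K) :> 'I_p /\
  (hex_disp 0 i j)%:~R = (hex_disp 1 i j)%:~R * K :> 'I_p.
Proof.
rewrite /hex_disp /hex_shift; case: ifP => _; rewrite ?mul0r // !(root6E Kroot) addn0.
have z6 : (1 - K) ^+ 6 = 1 by rewrite -(root6E Kroot).
split; first by rewrite -exprSr -addnS exprD z6 mulr1.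
by rewrite addn1 exprSr -mulrA [_ * K]mulrC (mulr_1subK Kroot) mulr1.
Qed.

Lemma hex_A_inj : injective hex_A.
Proof. by move=> j1 j2 /(congr1 (fun z => z%:~R : 'I_p)); rewrite !hex_AE. Qed.

Lemma hex_B_inj j : injective (hex_B^~ j).
Proof.
move=> i1 i2 /(congr1 (fun z => z%:~R : 'I_p)); rewrite !hex_BE => /addIr.
exact: (can_inj (mulKr_1subK Kroot)).
Qed.

Lemma hex_disp_bounds i j :
  [/\ 0 <= hex_A j + hex_disp 0 i j < p%:Z, 0 <= hex_B i j + hex_disp 0 i j < p%:Z,
      0 <= hex_B i j + hex_disp 5 i j < p%:Z & 0 <= hex_A j + hex_disp 1 i j < p%:Z].
Proof. apply: hex_shift_bounds (hex_A_bounds j) (hex_B_bounds i j) => //; lia. Qed.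

Lemma hex_square_vert i j :
  hex_square i j = (hex_B i j + hex_disp 5 i j)%:~R * (1 - K) + j * K.
Proof.
by rewrite /hex_square (addr_hex_coord Kroot i j) (hex_disp_rot i j).1 intrD hex_BE; ring.
Qed.

Lemma hex_square_horiz i j :
  hex_square i j = (hex_B i j)%:~R * (1 - K) + (hex_A j + hex_disp 1 i j)%:~R * K.
Proof.
by rewrite /hex_square (addr_hex_coord Kroot i j) (hex_disp_rot i j).2 intrD hex_AE hex_BE; ring.
Qed.

Lemma hex_square_row_inj i : injective (hex_square i).
Proof.
move=> j1 j2; rewrite /hex_square -!addrA => /addrI e.
have [A1 B1 _ _] := hex_disp_bounds i j1; have [A2 B2 _ _] := hex_disp_bounds i j2.
have eA : hex_A j1 + hex_disp 0 i j1 = hex_A j2 + hex_disp 0 i j2.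
  by apply: intr_Zp_inj => //; rewrite !intrD !hex_AE.
have eB : hex_B i j1 + hex_disp 0 i j1 = hex_B i j2 + hex_disp 0 i j2.
  by apply: intr_Zp_inj => //; rewrite !intrD !hex_BE -!addrA e.
by have [/hex_A_inj] := hex_shift_diag_inj k_ge2 eA eB.
Qed.

Lemma hex_square_col_inj j : injective (hex_square^~ j).
Proof.
move=> i1 i2; rewrite !hex_square_vert => /addIr; rewrite ![_ * (1 - K)]mulrC.
move=> /(can_inj (mul1subKr_K Kroot)) e.
have [_ _ B1 _] := hex_disp_bounds i1 j; have [_ _ B2 _] := hex_disp_bounds i2 j.
exact/hex_B_inj/(hex_shift_vert_inj k_ge2)/(intr_Zp_inj B1 B2).
Qed.

Lemma hex_square_orth i1 j1 i2 j2 :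
  hex_square i1 j1 = hex_square i2 j2 -> K * i1 + j1 = K * i2 + j2 -> (i1, j1) = (i2, j2).
Proof.
rewrite !hex_square_horiz => + eK.
have eB : hex_B i1 j1 = hex_B i2 j2 by rewrite /hex_B eK.
rewrite eB => /addrI; rewrite ![_ * K]mulrC => /(can_inj (mulKr_1subK Kroot)) e.
have [_ _ _ A1] := hex_disp_bounds i1 j1; have [_ _ _ A2] := hex_disp_bounds i2 j2.
have := intr_Zp_inj A1 A2 e; rewrite /hex_disp eB => /(hex_shift_horiz_inj k_ge2)/hex_A_inj ej.
by move: eB; rewrite ej => /hex_B_inj ->.
Qed.

Lemma hex_square_neq i j : (hex_square i j != i + j) = in_hex k (hex_A j) (hex_B i j).
Proof.
rewrite /hex_square /hex_disp /hex_shift; case: ifP => _; last by rewrite addr0 eqxx.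
rewrite (root6E Kroot) addn0 -{2}[i + j]addr0 (inj_eq (addrI _)).
have unit_1subK : 1 - K \is a GRing.unit by apply/unitrPr; exists K; rewrite mulrC mulr_1subK.
apply/negP => /eqP z.
by have := unitrX (hex_sector k (hex_A j) (hex_B i j)) unit_1subK; rewrite z unitr0.
Qed.

Lemma hex_square_latin : latin_fun hex_square.
Proof. by split; [exact: hex_square_row_inj | exact: hex_square_col_inj]. Qed.

Lemma hex_square_orthogonal : orthogonal (graph hex_square) (Bp p k).
Proof.
rewrite Bp_graph; apply: graph_orthogonal hex_square_latin _ _.
- by split=> [i|j]; [exact: addrI | move=> i1 i2 /addIr; exact: (can_inj (mulKr_1subK Kroot))].
- move=> [i1 j1] [i2 j2] e.
  by apply: hex_square_orth; [exact: (congr1 fst e) | exact: (congr1 snd e)].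
Qed.

Definition hex_trade : {set triple p} := trade_of (fun i j => 1%:R * i + j) hex_square.

Lemma hex_trade_orthogonal : orthogonal_trade 1 k hex_trade.
Proof.
apply: orthogonal_trade_of (Bp_graph 1) _ hex_square_latin hex_square_orthogonal.
by split=> [i|j] x y; rewrite !mul1r; [move/addrI | move/addIr].
Qed.

Lemma card_hex_trade : #|hex_trade| = (3 * k * (k - 1))%N.
Proof.
pose phi (c : 'I_p * 'I_p) := (c.2, K * c.1 + c.2).
have phi_inj : injective phi.
  move=> [i1 j1] [i2 j2] e; have /= ej := congr1 fst e; have /= := congr1 snd e.
  by rewrite ej => /addIr /(can_inj (mulKr_1subK Kroot)) ->.
have := card_hex_cells (r := k.-1) (n := p); rewrite prednK ?subn1 => [cells|]; last by lia.
rewrite card_trade_of -cells; try lia.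
rewrite -[RHS](card_preimset _ phi_inj).
by apply: eq_card => c; rewrite !inE mul1r eq_sym hex_square_neq.
Qed.

End HexSquare.

Section SixthRootModP.
Local Open Scope ring_scope.
Variable q : nat.
Local Notation p := q.+2.

Lemma Zp_sixth_rootE (k : nat) : ((k ^ 2 - k + 1) %% p = 0)%N <-> (k%:R : 'I_p) ^+ 2 - k%:R + 1 = 0.
Proof.
have kk : (k <= k ^ 2)%N by rewrite expnS expn1; nia.
rewrite -natrX -(natrB _ kk) natr1 -[(k ^ 2 - k).+1]addn1.
by split=> [h | /(congr1 val)]; [apply: val_inj; rewrite /= Zp_nat /= h | rewrite Zp_nat].
Qed.

Lemma unitZp_prime (w : 'I_p) : prime p -> w != 0 -> w \is a GRing.unit.
Proof.
move=> pr w0; rewrite -[w]natr_Zp (@unitZpE p) // prime_coprime // gtnNdvd //.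
by rewrite lt0n; apply: contra w0 => /eqP w0; apply/eqP/val_inj.
Qed.

Lemma exists_prim_cube_root_Zp : prime p -> (p %% 3 = 1)%N -> exists w : 'I_p, w ^+ 2 + w + 1 = 0.
Proof.
move=> pr p3.
have [x _ ox] : {x | x \in units_Zp p & #[x]%g = 3%N}.
  apply: Cauchy => //; rewrite card_units_Zp // totient_prime //.
  by apply/dvdnP; exists (p %/ 3); lia.
exists (val x).
have x3 : val x ^+ 3 = 1 by rewrite -FinRing.val_unitX -ox expg_order.
have x1 : val x - 1 \is a GRing.unit.
  apply: unitZp_prime; rewrite // subr_eq0; apply/eqP => x1.
  by move: ox; rewrite (_ : x = 1%g) ?order1 //; apply: val_inj.
apply: (mulrI x1); rewrite mulr0.
have -> : (val x - 1) * (val x ^+ 2 + val x + 1) = val x ^+ 3 - 1 by ring.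
by rewrite x3 subrr.
Qed.

Lemma sixth_root_ge2 (k : nat) : (k%:R : 'I_p) ^+ 2 - k%:R + 1 = 0 -> (2 <= k)%N.
Proof.
by case: k => [|[|//]] /eqP; rewrite ?expr0n ?expr1n ?subr0 ?subrr ?add0r oner_eq0.
Qed.

Lemma exists_sixth_root_Zp : prime p -> (p %% 6 = 1)%N ->
  exists k : nat, (2 <= k <= (p + 1) %/ 2)%N /\ ((k ^ 2 - k + 1) %% p = 0)%N.
Proof.
move=> pr p6; have [w w3] : exists w : 'I_p, w ^+ 2 + w + 1 = 0.
  by apply: exists_prim_cube_root_Zp pr _; lia.
pose k := val (- w).
have Kk : (k%:R : 'I_p) ^+ 2 - k%:R + 1 = 0 by rewrite natr_Zp sqrrN opprK.
have kp : (k < p)%N := ltn_ord _.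
have [small | large] := leqP k ((p + 1) %/ 2).
  by exists k; rewrite Zp_sixth_rootE sixth_root_ge2.
have K'k : ((p + 1 - k)%N%:R : 'I_p) ^+ 2 - (p + 1 - k)%N%:R + 1 = 0.
  have p0 : (p%:R : 'I_p) = 0 by apply: val_inj; rewrite Zp_nat /= modnn.
  rewrite natrB ?natrD ?p0 ?add0r; last by lia.
  by rewrite -[RHS]Kk; ring.
by exists (p + 1 - k)%N; rewrite Zp_sixth_rootE sixth_root_ge2 //=; split=> //; lia.
Qed.

End SixthRootModP.

Theorem mainTheorem11 (p : nat) (hp : prime p) (hp6 : p %% 6 = 1) :
  (exists k : nat, 2 <= k <= p - 1 /\
     exists T : {set triple p}, orthogonal_trade 1 k T /\ ~~ (p %| #|T|)) /\
  (exists k : nat, 2 <= k <= (p + 1) %/ 2 /\ (k ^ 2 - k + 1) %% p = 0) /\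
  (forall k : nat, 2 <= k <= (p + 1) %/ 2 -> (k ^ 2 - k + 1) %% p = 0 ->
     exists T : {set triple p}, orthogonal_trade 1 k T /\ #|T| = 3 * k * (k - 1)).
Proof.
case: p hp hp6 => [|[|q]] // hp hp6.
have trade k : 2 <= k <= (q.+2 + 1) %/ 2 -> (k ^ 2 - k + 1) %% q.+2 = 0 ->
    exists T : {set triple q.+2}, orthogonal_trade 1 k T /\ #|T| = 3 * k * (k - 1).
  move=> /andP[k2 kp] /Zp_sixth_rootE Kroot; exists (hex_trade q k).
  by split; [apply: hex_trade_orthogonal | apply: card_hex_trade]; rewrite //; lia.
have [k [kb Kroot]] := exists_sixth_root_Zp hp hp6.
split; last by split; first by exists k.
have [T [orthT cardT]] := trade k kb Kroot.
exists k; split; first lia.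
by exists T; split => //; rewrite cardT !Euclid_dvdM // !gtnNdvd //; lia.
Qed.
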